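(* Let $J$ be an $\mathcal{S}$-supported job set and $J_S$ a $(\beta,T)$-good subset of $J$. Let integers $L\ge T$ and $l$ be fixed, let $h$ be a hash function that is $(L,l)$-good for $J_S$, and let $l':=4\beta l$. Then StatelessWeakScheduler, applied to $J$ with parameters $L,l',h$, completes at least a fourth of the jobs of $J_S$ within $2Ll'$ time steps, regardless of the jobs' starting positions and of the choices of which eligible job to work on.
   Context: Job-shop scheduling with unit jobs: machines $M$; jobs with sequences $\mathrm{seq}(j)\in M^*$, unique identifiers $\mathrm{ind}(j)\in I=\{1,\dots,|M|^c\}$ and positions $\mathrm{pos}(j)_t\in\{0,\dots,\mathrm{len}(\mathrm{seq}(j))\}$ (completed at the last value); $\mathrm{que}(m)_t=\{j:\mathrm{seq}(j)_{\mathrm{pos}(j)_t}=m\}$; each step each machine works on at most one job in its queue, which advances one position. $J$ is $\mathcal{S}$-supported if $\mathrm{seq}(j)\in\mathcal{S}$ for all $j\in J$. $C(J)=\max_m\sum_j|\{i:\mathrm{seq}(j)_i=m\}|$, $D(J)=\max_j\mathrm{len}(\mathrm{seq}(j))$. $J_S\subseteq J$ is $(\beta,T)$-good if $|J_S|\ge\frac1\beta|J|$ and $C(J_S)+D(J_S)\le T$. For $h:M^*\times I\to\{0,\dots,L-1\}$, $h(j):=h(\mathrm{seq}(j),\mathrm{ind}(j))$, $\mathrm{virt}(j,i)=h(j)+i$ for $i<\mathrm{len}(\mathrm{seq}(j))$ and $\infty$ otherwise, $\mathrm{virt}(j)_t=\mathrm{virt}(j,\mathrm{pos}(j)_t)$.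 StatelessWeakScheduler$(m,L,l',h,t)$ at subroutine-local time $t$: $T'=\lfloor t/l'\rfloor$, $Q=\{j\in\mathrm{que}(m)_t:\mathrm{virt}(j)_t=T'\}$; if $0<|Q|\le l'$ work on an arbitrary $j\in Q$, else do nothing. Bad pattern for $(M,L,l,J_S)$: sets $B_{T',m}$, $0\le T'<2L$, $m\in M$, of pairs $(j,i)$ with $j\in J_S$ and $\mathrm{seq}(j)_i=m$, each $j$ appearing at most once overall, $|B_{T',m}|\in\{0\}\cup(l,|J_S|]$, $\sum|B_{T',m}|>|J_S|/2$; it occurs for $h$ if $\mathrm{virt}(j,i)=T'$ for all $(j,i)\in B_{T',m}$. $h$ is $(L,l)$-good for $J_S$ if no such bad pattern occurs. *)

From mathcomp Require Import all_boot.
Set Implicit Arguments. Unset Strict Implicit. Unset Printing Implicit Defensive.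

(* Positions [pos j] range over 0..size (sq j); position = size (sq j) means completed. *)

Section JobShop.
Variables (M J : finType) (sq : J -> seq M) (ind : J -> nat).

Definition valid_ids (c : nat) : Prop :=
  injective ind /\ forall j, 1 <= ind j <= #|M| ^ c.

Definition supported (S : pred (seq M)) : Prop := forall j, S (sq j).

Definition congestion (JS : {set J}) : nat :=
  \max_(m : M) \sum_(j in JS) count (pred1 m) (sq j).

Definition dilation (JS : {set J}) : nat := \max_(j in JS) size (sq j).

Definition good_subset (beta T : nat) (JS : {set J}) : Prop :=
  #|J| <= beta * #|JS| /\ congestion JS + dilation JS <= T.

Definition hj (h : seq M -> nat -> nat) (j : J) : nat := h (sq j) (ind j).

(* virt(j,i) = h(j)+i if i < len(seq j), infinity (None) otherwise *)
Definition virt (h : seq M -> nat -> nat) (j : J) (i : nat) : option nat :=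
  if i < size (sq j) then Some (hj h j + i) else None.

Definition que (pos : J -> nat) (m : M) : {set J} :=
  [set j | onth (sq j) (pos j) == Some m].

Definition Qset (h : seq M -> nat -> nat) (l' t : nat) (pos : J -> nat) (m : M)
  : {set J} :=
  [set j in que pos m | virt h j (pos j) == Some (t %/ l')].

(* One step of StatelessWeakScheduler(m, L, l', h, t) on every machine m:
   [work m] is the job machine m works on (None = do nothing). *)
Definition sws_step (h : seq M -> nat -> nat) (l' t : nat) (pos : J -> nat)
  (work : M -> option J) : Prop :=
  forall m, let Q := Qset h l' t pos m in
  if (0 < #|Q| <= l') then exists2 j, work m = Some j & j \in Q
  else work m = None.

(* A run of StatelessWeakScheduler (subroutine-local time starting at 0):
   positions [pos t j] at time t, initial positions arbitrary, and at each step
   each job worked on advances by one position. *)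
Definition sws_run (h : seq M -> nat -> nat) (l' : nat)
  (pos : nat -> J -> nat) (work : nat -> M -> option J) : Prop :=
  (forall j, pos 0 j <= size (sq j)) /\
  forall t, sws_step h l' t (pos t) (work t) /\
    forall j, pos t.+1 j = pos t j + [exists m, work t m == Some j].

(* Bad pattern for (M, L, l, J_S): sets B_{T',m} (0 <= T' < 2L) of pairs (j,i),
   represented as duplicate-free sequences. *)
Definition bad_pattern (L l : nat) (JS : {set J})
  (B : nat -> M -> seq (J * nat)) : Prop :=
  [/\ (forall T' m, T' < 2 * L -> uniq (B T' m)),
      (forall T' m p, T' < 2 * L -> p \in B T' m ->
          p.1 \in JS /\ onth (sq p.1) p.2 = Some m),
      (forall T1 m1 p1 T2 m2 p2, T1 < 2 * L -> T2 < 2 * L ->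
          p1 \in B T1 m1 -> p2 \in B T2 m2 -> p1.1 = p2.1 ->
          [/\ T1 = T2, m1 = m2 & p1 = p2]),
      (forall T' m, T' < 2 * L ->
          size (B T' m) = 0 \/ (l < size (B T' m) <= #|JS|)) &
      #|JS| < 2 * \sum_(T' < 2 * L) \sum_(m : M) size (B T' m)].

Definition pattern_occurs (L : nat) (h : seq M -> nat -> nat)
  (B : nat -> M -> seq (J * nat)) : Prop :=
  forall T' m p, T' < 2 * L -> p \in B T' m -> virt h p.1 p.2 = Some T'.

Definition good_hash (L l : nat) (JS : {set J}) (h : seq M -> nat -> nat) : Prop :=
  ~ exists B, bad_pattern L l JS B /\ pattern_occurs L h B.

End JobShop.

From mathcomp Require Import all_boot zify.
Set Implicit Arguments. Unset Strict Implicit. Unset Printing Implicit Defensive.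

(* A job advances only at its virtual time,
   so an unfinished job j of J_S with virtual time v < 2L stands still from time
   v l' on.  During [v l', (v+1) l') its cell (v, m) therefore never gains jobs,
   and if it held at most l' jobs the machine would remove one of them per step,
   eventually j itself; hence the cell holds more than l' = 4 beta l jobs of J,
   and it is frozen from then on.  Double counting shows that the unfinished jobs
   whose cell holds at most l jobs of J_S number at most |J| l / l' <= |J_S| / 4.
   The remaining unfinished jobs, placed in their cells, form a bad pattern
   occurring for h as soon as they exceed |J_S| / 2, which h forbids. *)

Lemma constant_on_interval (T : Type) (f : nat -> T) a b :
  (forall t, a <= t < b -> f t = f a -> f t.+1 = f a) ->
  forall t, a <= t <= b -> f t = f a.
Proof.
move=> fS; elim=> [|t IHt] /andP[le_at le_tb].
  by move: le_at; rewrite leqn0 => /eqP->.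
have [le_a_t | lt_t_a] := leqP a t.
  by apply: fS; rewrite ?le_a_t ?IHt // le_a_t ltnW.
by have -> : a = t.+1 by apply/eqP; rewrite eqn_leq le_at.
Qed.

Lemma divn_eq_window v t d : 0 < d -> v * d <= t < v.+1 * d -> t %/ d = v.
Proof.
move=> d_gt0 /andP[]; rewrite -leq_divRL // -ltn_divLR // ltnS => ge_v le_v.
by apply/eqP; rewrite eqn_leq ge_v le_v.
Qed.

Section DoubleCounting.
Variables (T : finType) (U : eqType) (key : T -> U).

Lemma card_le_sum_classes (I : finType) (A : {set T}) (g : I -> U) :
  (forall x, x \in A -> exists i, key x = g i) ->
  #|A| <= \sum_i #|[set x in A | key x == g i]|.
Proof.
move=> keyA; rewrite -sum1_card.
apply: (@leq_trans (\sum_(x in A) \sum_i (key x == g i : nat))).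
  apply: leq_sum => x /keyA[i kx].
  by rewrite (bigD1 i) //= kx eqxx leq_addr.
rewrite exchange_big; apply: leq_sum => i _.
by rewrite -big_mkcondr sum1dep_card.
Qed.

Lemma card_mul_le_classes (A : {set T}) a b :
  (forall x, x \in A -> a <= #|[set y | key y == key x]|) ->
  (forall x, x \in A -> #|[set y in A | key y == key x]| <= b) ->
  #|A| * a <= #|T| * b.
Proof.
move=> big_class small_class; rewrite -!sum_nat_const.
apply: (@leq_trans (\sum_(x in A) \sum_y (key y == key x : nat))).
  by apply: leq_sum => x /big_class; rewrite -big_mkcondr sum1dep_card.
rewrite exchange_big; apply: leq_sum => y _; rewrite -big_mkcondr sum1dep_card.
have [-> | [x0 Ax0]] := set_0Vmem [set x in A | key y == key x].
  by rewrite cards0.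
move: (Ax0); rewrite inE => /andP[/small_class small_x0 /eqP ky].
apply: leq_trans small_x0; apply: subset_leq_card.
by apply/subsetP => x; rewrite !inE ky eq_sym.
Qed.

End DoubleCounting.

Lemma quarter_le_of_mulS_le s n N beta l :
  N <= beta * n -> s * (4 * beta * l).+1 <= N * l -> 4 * s <= n.
Proof.
move=> le_N le_s; have le_Nl : N * l <= n * (beta * l).
  by rewrite mulnCA mulnA leq_mul2r le_N orbT.
have [bl0 | bl_gt0] := posnP (beta * l).
  by move: le_s le_Nl; rewrite -mulnA bl0; nia.
rewrite -(leq_pmul2r bl_gt0); apply: leq_trans le_Nl; apply: leq_trans le_s.
by rewrite mulnS -mulnA mulnCA (mulnA 4) leq_addl.
Qed.

Section Cells.
Variables (M J : finType) (sq : J -> seq M) (ind : J -> nat) (h : seq M -> nat -> nat).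

Definition cell (p : J -> nat) (j : J) : option nat * option M :=
  (virt sq ind h j (p j), onth (sq j) (p j)).

Definition occupants (p : J -> nat) (x : option nat * option M) : {set J} :=
  [set k | cell p k == x].

Lemma cell_SomeP p j v m : cell p j = (Some v, Some m) ->
  [/\ p j < size (sq j), hj sq ind h j + p j = v & onth (sq j) (p j) = Some m].
Proof. by rewrite /cell /virt; case: ifP => // lt_pj [<- ->]. Qed.

Lemma cell_pending p j : p j < size (sq j) ->
  exists m, cell p j = (Some (hj sq ind h j + p j), Some m).
Proof.
move=> lt_pj; rewrite /cell /virt lt_pj.
case on_pj: (onth (sq j) (p j)) => [m|]; first by exists m.
by move: lt_pj; rewrite -onthTE on_pj.
Qed.

Lemma Qset_occupants l' t p m :
  Qset sq ind h l' t p m = occupants p (Some (t %/ l'), Some m).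
Proof. by apply/setP => k; rewrite !inE xpair_eqE andbC. Qed.

End Cells.

Section Run.
Variables (M J : finType) (sq : J -> seq M) (ind : J -> nat) (h : seq M -> nat -> nat).
Variables (lp : nat) (pos : nat -> J -> nat) (work : nat -> M -> option J).
Hypothesis run : sws_run sq ind h lp pos work.

Local Notation cell := (cell sq ind h).
Local Notation occupants := (occupants sq ind h).
Local Notation hj := (hj sq ind h).

Lemma posS t j : pos t.+1 j = pos t j + [exists m, work t m == Some j].
Proof. by case: run => _ /(_ t) [_ ->]. Qed.

Lemma worked_cell t j : [exists m, work t m == Some j] ->
  exists2 m, work t m = Some j & cell (pos t) j = (Some (t %/ lp), Some m).
Proof.
case/existsP=> m /eqP work_m; exists m => //.
case: run => _ /(_ t) [/(_ m) /= + _]; rewrite Qset_occupants.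
case: ifP => _; last by rewrite work_m.
by case=> k; rewrite work_m => -[->]; rewrite inE => /eqP.
Qed.

Lemma worked_virt t j : [exists m, work t m == Some j] ->
  pos t j < size (sq j) /\ hj j + pos t j = t %/ lp.
Proof. by case/worked_cell=> m _ /cell_SomeP[]. Qed.

Lemma pos_le_size t j : pos t j <= size (sq j).
Proof.
elim: t => [|t IHt]; first by case: run.
rewrite posS; case: (boolP [exists m, _]) => [/worked_virt[lt_tj _] | _].
  by rewrite addn1.
by rewrite addn0.
Qed.

Lemma pos_homo j : {homo pos^~ j : t1 t2 / t1 <= t2}.
Proof. by apply: (homo_leq leqnn leq_trans) => t; rewrite posS leq_addr. Qed.

Section Frozen.
Hypothesis lp_gt0 : 0 < lp.

(* A job is worked on only at its current virtual time, which then increases: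
   a job whose next virtual time is not ahead of the clock cannot move. *)
Lemma pos_frozen t j v : v * lp <= t -> hj j + pos t.+1 j <= v ->
  pos t.+1 j = pos t j.
Proof.
rewrite -leq_divRL // posS.
by case: (boolP [exists m, _]) => [/worked_virt[_ virt_j] | _]; lia.
Qed.

Lemma occupants_no_entry t v m : v * lp <= t ->
  occupants (pos t.+1) (Some v, Some m) \subset
  occupants (pos t) (Some v, Some m).
Proof.
move=> le_vt; apply/subsetP => k; rewrite !inE => /eqP cell_k.
have [_ virt_k _] := cell_SomeP cell_k.
rewrite /cell -(pos_frozen le_vt) ?virt_k //.
by apply/eqP; exact: cell_k.
Qed.

Lemma crowded_occupants_stable t v m :
  v * lp <= t -> lp < #|occupants (pos t) (Some v, Some m)| ->
  occupants (pos t.+1) (Some v, Some m) = occupants (pos t) (Some v, Some m).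
Proof.
move=> le_vt crowded; apply/eqP; rewrite eqEsubset occupants_no_entry //=.
apply/subsetP => k k_in; rewrite inE /cell posS.
case: (boolP [exists m, _]) => [worked | _]; last by rewrite addn0; rewrite inE in k_in.
have [m' work_m' cell_k] := worked_cell worked.
move: k_in; rewrite inE cell_k => /eqP[v_eq m_eq]; subst m'.
case: run => _ /(_ t) [/(_ m) /= + _]; rewrite Qset_occupants v_eq ltnNge.
by move: crowded; rewrite ltnNge => /negbTE->; rewrite andbF work_m'.
Qed.

Lemma occupants_shrink t m :
  0 < #|occupants (pos t) (Some (t %/ lp), Some m)| <= lp ->
  #|occupants (pos t.+1) (Some (t %/ lp), Some m)| <
    #|occupants (pos t) (Some (t %/ lp), Some m)|.
Proof.
move=> busy; case: run => _ /(_ t) [/(_ m) /= + _]; rewrite Qset_occupants busy.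
set x := (Some _, Some m).
case=> k work_k k_in.
have worked : [exists m, work t m == Some k] by apply/existsP; exists m; rewrite work_k.
have k_out : k \notin occupants (pos t.+1) x.
  rewrite !inE; apply/eqP => /cell_SomeP[_ + _]; move: k_in; rewrite inE => /eqP.
  by move=> /cell_SomeP[_ + _]; rewrite posS worked; lia.
apply: proper_card; rewrite properE occupants_no_entry ?leq_divM //=.
by apply/subsetPn; exists k.
Qed.

End Frozen.

Lemma pending_occupants_crowded H j :
  (hj j + pos H j).+1 * lp <= H -> pos H j < size (sq j) ->
  lp < #|occupants (pos H) (cell (pos H) j)|.
Proof.
move=> le_H pending; have [lp0 | lp_gt0] := posnP lp.
  by rewrite lp0; apply/card_gt0P; exists j; rewrite inE.
have [m cell_j] := cell_pending ind h pending; rewrite cell_j.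
set v := hj j + pos H j in cell_j le_H; set x := (Some v, Some m).
rewrite mulSn in le_H; set t0 := v * lp in le_H *.
have le_t0H : t0 <= H by apply: leq_trans le_H; rewrite leq_addl.
have pos_window : forall t, t0 <= t <= H -> pos t j = pos t0 j.
  apply: constant_on_interval => t /andP[le_t lt_tH] <-.
  by apply: (pos_frozen lp_gt0 le_t); rewrite /v leq_add2l pos_homo.
have j_occ : forall t, t0 <= t <= H -> j \in occupants (pos t) x.
  move=> t t_in; rewrite inE -[x]cell_j /cell pos_window // (pos_window H) //.
  by rewrite le_t0H leqnn.
have crowded0 : lp < #|occupants (pos t0) x|.
  rewrite ltnNge; apply/negP => sparse0.
  have drain i :
      i <= lp -> #|occupants (pos (t0 + i)) x| + i <= #|occupants (pos t0) x|.
    elim: i => [|i IHi] lt_i; first by rewrite !addn0.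
    have div_v : (t0 + i) %/ lp = v.
      by apply: divn_eq_window; rewrite // mulSn -/t0; lia.
    have := @occupants_shrink lp_gt0 (t0 + i) m; rewrite div_v -/x -addnS.
    have : 0 < #|occupants (pos (t0 + i)) x|.
      by apply/card_gt0P; exists j; apply: j_occ; rewrite leq_addr; lia.
    move: (IHi (ltnW lt_i)); lia.
  have := drain lp (leqnn _).
  have : 0 < #|occupants (pos (t0 + lp)) x|.
    by apply/card_gt0P; exists j; apply: j_occ; rewrite leq_addr addnC.
  lia.
have stable : forall t, t0 <= t <= H -> occupants (pos t) x = occupants (pos t0) x.
  apply: constant_on_interval => t /andP[le_t _] occ_t.
  by rewrite crowded_occupants_stable ?occ_t.
by rewrite stable // le_t0H leqnn.
Qed.

End Run.

Section FinalCells.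
Variables (M J : finType) (sq : J -> seq M) (ind : J -> nat) (h : seq M -> nat -> nat).
Variables (JS : {set J}) (L l : nat) (p : J -> nat).

Local Notation cell := (cell sq ind h p).
Local Notation occupants := (occupants sq ind h p).

Definition pending := [set j in JS | p j < size (sq j)].

Definition heavy := [set j | l < #|JS :&: occupants (cell j)|].

Lemma card_pending (le_p : forall j, p j <= size (sq j)) :
  #|pending| + #|[set j in JS | p j == size (sq j)]| = #|JS|.
Proof.
rewrite -(cardsID [set j | p j < size (sq j)] JS); congr (_ + _).
all: apply: eq_card => j.
  by rewrite !inE andbC.
by rewrite !inE -leqNgt eqn_leq le_p andbC.
Qed.

Lemma card_sparse_mul_le a :
  (forall j, j \in pending :\: heavy -> a < #|occupants (cell j)|) ->
  #|pending :\: heavy| * a.+1 <= #|J| * l.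
Proof.
move=> crowded_in_J; apply: card_mul_le_classes crowded_in_J _ => j.
rewrite inE => /andP[]; rewrite inE -leqNgt => sparse_j _.
apply: leq_trans sparse_j; apply: subset_leq_card; apply/subsetP => k.
by rewrite !inE => /andP[/andP[_ /andP[-> _]] ->].
Qed.

Section BadPattern.
Hypothesis pending_virt_lt : forall j, j \in pending -> hj sq ind h j + p j < 2 * L.

Definition crowd_pattern (v : nat) (m : M) : seq (J * nat) :=
  [seq (j, p j) | j <- enum [set k in pending :&: heavy | cell k == (Some v, Some m)]].

Lemma pending_heavy_class j : j \in pending :&: heavy ->
  [set k in pending :&: heavy | cell k == cell j] = JS :&: occupants (cell j).
Proof.
rewrite !inE => /andP[/andP[_ pending_j] heavy_j]; apply/setP => k; rewrite !inE.
have [cell_kj | ] := eqVneq (cell k) (cell j); rewrite ?andbF // andbT.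
have [m cell_j] := cell_pending ind h pending_j.
have [pending_k _ _] := cell_SomeP (etrans cell_kj cell_j).
by rewrite pending_k andbT cell_kj heavy_j andbT.
Qed.

Lemma mem_crowd_pattern v m q : q \in crowd_pattern v m ->
  exists2 j, q = (j, p j) & j \in JS /\ cell j = (Some v, Some m).
Proof.
case/mapP=> j; rewrite mem_enum !inE => /andP[/andP[/andP[JS_j _] _] /eqP cell_j] ->.
by exists j.
Qed.

Lemma crowd_pattern_occurs : pattern_occurs sq ind L h crowd_pattern.
Proof.
move=> v m q _ /mem_crowd_pattern[j -> [_ /cell_SomeP[pj virt_j _]]].
by rewrite /virt pj virt_j.
Qed.

Lemma size_crowd_pattern v m :
  size (crowd_pattern v m) =
    #|[set k in pending :&: heavy | cell k == (Some v, Some m)]|.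
Proof. by rewrite size_map -cardE. Qed.

Lemma crowd_pattern_bad :
  #|JS| < 2 * #|pending :&: heavy| -> bad_pattern sq L l JS crowd_pattern.
Proof.
move=> many_crowded; split.
- by move=> v m _; rewrite map_inj_uniq ?enum_uniq // => j k [].
- by move=> v m q _ /mem_crowd_pattern[j -> [JS_j /cell_SomeP[_ _ ->]]].
- move=> v1 m1 q1 v2 m2 q2 _ _ /mem_crowd_pattern[j -> [_ cell1]].
  move=> /mem_crowd_pattern[k -> [_ cell2]] /= eq_jk; subst k.
  by move: cell2; rewrite cell1 => -[-> ->].
- move=> v m _; rewrite size_crowd_pattern.
  have [-> | [j]] :=
    set_0Vmem [set k in pending :&: heavy | cell k == (Some v, Some m)].
    by left; rewrite cards0.
  rewrite inE => /andP[crowded_j /eqP <-]; right; rewrite pending_heavy_class //.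
  move: crowded_j; rewrite !inE => /andP[_ ->] /=.
  by apply: subset_leq_card; apply/subsetP => k; rewrite inE => /andP[].
- apply: leq_trans many_crowded _; rewrite leq_mul2l /=.
  under eq_bigr => v _ do under eq_bigr => m _ do rewrite size_crowd_pattern.
  rewrite pair_big /=.
  apply: (card_le_sum_classes (key := cell)
    (g := fun i : 'I_(2 * L) * M => (Some (val i.1), Some i.2))).
  move=> j /setIP[pending_j _]; move: (pending_j); rewrite inE => /andP[_ pj].
  have [m cell_j] := cell_pending ind h pj.
  by exists (Ordinal (pending_virt_lt pending_j), m).
Qed.

End BadPattern.

End FinalCells.

Theorem lemma5p19 (M J : finType) (sq : J -> seq M) (ind : J -> nat) (c : nat)
  (S : pred (seq M)) (JS : {set J}) (beta T L l : nat)
  (h : seq M -> nat -> nat)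
  (pos : nat -> J -> nat) (work : nat -> M -> option J) :
  @valid_ids M J ind c ->
  @supported M J sq S ->
  0 < beta ->
  @good_subset M J sq beta T JS ->
  T <= L ->
  (forall s i, 1 <= i <= #|M| ^ c -> h s i < L) ->
  @good_hash M J sq ind L l JS h ->
  @sws_run M J sq ind h (4 * beta * l) pos work ->
  #|JS| <= 4 * #|[set j in JS | pos (2 * L * (4 * beta * l)) j == size (sq j)]|.
Proof.
move=> ids _ _ [JS_large CD_le_T] le_TL h_lt good run.
set lp := 4 * beta * l in run *; set H := 2 * L * lp.
set pending_H := pending sq JS (pos H); set heavy_H := heavy sq ind h JS l (pos H).
have virt_lt j : j \in pending_H -> hj sq ind h j + pos H j < 2 * L.
  rewrite inE => /andP[JS_j pj]; have hj_lt : hj sq ind h j < L by apply/h_lt/ids.2.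
  have : size (sq j) <= T.
    apply: leq_trans CD_le_T; apply: leq_trans (leq_addl _ _).
    exact: leq_bigmax_cond.
  lia.
have sparse_le : 4 * #|pending_H :\: heavy_H| <= #|JS|.
  apply: quarter_le_of_mulS_le JS_large (card_sparse_mul_le _) => j.
  move=> /setDP[pending_j _]; move: (pending_j); rewrite inE => /andP[_ pj].
  apply: (pending_occupants_crowded run) => //.
  by rewrite /H leq_mul2r virt_lt ?orbT.
rewrite leqNgt; apply/negP => few_done; apply: good.
exists (crowd_pattern sq ind h JS l (pos H)); split; last exact: crowd_pattern_occurs.
apply: crowd_pattern_bad => //.
have := card_pending JS (pos_le_size run H); have := cardsID heavy_H pending_H.
by rewrite -/pending_H -/heavy_H; lia.
Qed.
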